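(* For all $u,v,x,y\in H$: (i) $T(u\otimes v\otimes x\otimes A^*y)=\bar T(y\otimes u\otimes Av\otimes x)$; (ii) $T(u\otimes x\otimes v\otimes y)=\bar T(u\otimes Av\otimes Bx\otimes y)$; (iii) $T(u\otimes v\otimes x\otimes y)=\bar T(v\otimes Bx\otimes y\otimes B^*u)$.
   Context: Let $\mathcal C$ be a strict monoidal category with tensor product $\boxtimes$ and unit object $\mathbb I$ which is an Ab-category (all Hom-sets are abelian groups, composition and $\boxtimes$ are biadditive) whose ground ring $\mathsf k=\operatorname{End}(\mathbb I)$ is a field; each $\operatorname{Hom}(V,W)$ is a $\mathsf k$-vector space via $kf=k\boxtimes f$, and $\boxtimes$ is $\mathsf k$-bilinear on morphisms. An object $V$ is simple if $\operatorname{End}(V)=\mathsf k\,\mathrm{Id}_V$; for such $V$ and $f\in\operatorname{End}(V)$, $\langle f\rangle\in\mathsf k$ denotes the scalar with $f=\langle f\rangle\mathrm{Id}_V$. For objects $V_i$ write $H^{ij}_k=\operatorname{Hom}(V_k,V_i\boxtimes V_j)$ and $H^k_{ij}=\operatorname{Hom}(V_i\boxtimes V_j,V_k)$. A $\Psi$-system in $\mathcal C$ consists of (1) a family of simple objects $\{V_i\}_{i\in I}$ with $\operatorname{Hom}(V_i,V_j)=0$ for $i\neq j$; (2) an involution $i\mapsto i^*$ of $I$; (3) morphisms $b_i:\mathbb I\to V_i\boxtimes V_{i^*}$, $d_i:V_i\boxtimes V_{i^*}\to\mathbb I$ ($i\in I$) with $(\mathrm{Id}_{V_i}\boxtimes d_{i^*})(b_i\boxtimes\mathrm{Id}_{V_i})=\mathrm{Id}_{V_i}$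 and $(d_i\boxtimes\mathrm{Id}_{V_i})(\mathrm{Id}_{V_i}\boxtimes b_{i^*})=\mathrm{Id}_{V_i}$; (4) for all $i,j\in I$ such that $H^{ij}_k\neq0$ for some $k\in I$, the morphism $\mathrm{Id}_{V_i\boxtimes V_j}$ lies in the image of the linear map $\bigoplus_{k\in I}H^{ij}_k\otimes_{\mathsf k}H^k_{ij}\to\operatorname{End}(V_i\boxtimes V_j)$, $x\otimes y\mapsto x\circ y$. Fix a $\Psi$-system in $\mathcal C$. Let $\hat H=\bigoplus_{i,j,k\in I}H^k_{ij}$, $\check H=\bigoplus_{i,j,k\in I}H^{ij}_k$, $H=\hat H\oplus\check H$, and let $\pi^k_{ij}:H\to H^k_{ij}$, $\pi^{ij}_k:H\to H^{ij}_k$ be the projections. Define $A,B\in\operatorname{End}_{\mathsf k}(H)$ by $Ax=\sum_{i,j,k\in I}\big((\mathrm{Id}_{V_{i^*}}\boxtimes\pi^k_{ij}x)(b_{i^*}\boxtimes\mathrm{Id}_{V_j})+(d_{i^*}\boxtimes\mathrm{Id}_{V_j})(\mathrm{Id}_{V_{i^*}}\boxtimes\pi^{ij}_kx)\big)$, $Bx=\sum_{i,j,k\in I}\big((\pi^k_{ij}x\boxtimes\mathrm{Id}_{V_{j^*}})(\mathrm{Id}_{V_i}\boxtimes b_j)+(\mathrm{Id}_{V_i}\boxtimes d_j)(\pi^{ij}_kx\boxtimes\mathrm{Id}_{V_{j^*}})\big)$. Define the symmetric bilinear form on $H$: $\langle x,y\rangle=\sum_{i,j,k\in I}\big(\langle\pi^k_{ij}x\circ\pi^{ij}_ky\rangle+\langle\pi^k_{ij}y\circ\pi^{ij}_kx\rangle\big)$.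 A transpose of $f\in\operatorname{End}(H)$ is the (unique) $f^*\in\operatorname{End}(H)$ with $\langle fx,y\rangle=\langle x,f^*y\rangle$ for all $x,y\in H$; $A^*$, $B^*$ denote the transposes of $A$, $B$ (which exist). Define linear forms $T,\bar T:H^{\otimes4}\to\mathsf k$ (tensor products over $\mathsf k$) by $T(u\otimes v\otimes x\otimes y)=\sum_{i,j,k,l,m,n\in I}\big\langle \pi^m_{kl}u\circ(\pi^k_{ij}v\boxtimes\mathrm{Id}_{V_l})\circ(\mathrm{Id}_{V_i}\boxtimes\pi^{jl}_nx)\circ\pi^{in}_my\big\rangle$, $\bar T(u\otimes v\otimes x\otimes y)=\sum_{i,j,k,l,m,n\in I}\big\langle\pi^m_{in}u\circ(\mathrm{Id}_{V_i}\boxtimes\pi^n_{jl}v)\circ(\pi^{ij}_kx\boxtimes\mathrm{Id}_{V_l})\circ\pi^{kl}_my\big\rangle$ (only finitely many terms are nonzero). *)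

From HB Require Import structures.
From mathcomp Require Import all_boot all_order all_algebra.
From mathcomp Require Import boolp classical_sets cardinality fsbigop.
From Stdlib Require Import ClassicalEpsilon.

Set Implicit Arguments.
Unset Strict Implicit.
Unset Printing Implicit Defensive.

Import GRing.Theory.
Local Open Scope ring_scope.
Local Open Scope classical_set_scope.

(* Transport of a morphism along equalities of its source and target objects
   (needed because strictness of the monoidal structure is an equality of
   objects). *)
Definition castH (O : Type) (F : O -> O -> Type) (X X' Y Y' : O)
  (eX : X = X') (eY : Y = Y') (f : F X Y) : F X' Y' :=
  match eX in _ = X0 return F X0 Y' with
  | erefl => match eY in _ = Y0 return F X Y0 with erefl => f end
  end.
Arguments castH {O} F {X X' Y Y'} eX eY f.

(* A strict monoidal Ab-category whose ground ring End(unit) is (isomorphic,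
   via [scal], to) the field K; Hom-spaces are K-vector spaces with
   k f = k (x) f. *)
Record smcat (K : fieldType) := SMCat {
  ob : Type;
  mor : ob -> ob -> lmodType K;
  mcomp : forall X Y Z : ob, mor Y Z -> mor X Y -> mor X Z;
  idm : forall X : ob, mor X X;
  tens : ob -> ob -> ob;
  unit_ob : ob;
  tensm : forall X X' Y Y' : ob,
      mor X X' -> mor Y Y' -> mor (tens X Y) (tens X' Y');
  scal : K -> mor unit_ob unit_ob;
  compA : forall X Y Z W (f : mor Z W) (g : mor Y Z) (h : mor X Y),
      mcomp f (mcomp g h) = mcomp (mcomp f g) h;
  comp1m : forall X Y (f : mor X Y), mcomp (idm Y) f = f;
  compm1 : forall X Y (f : mor X Y), mcomp f (idm X) = f;
  comp_linl : forall X Y Z (g : mor X Y) (a : K) (f f' : mor Y Z),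
      mcomp (a *: f + f') g = a *: mcomp f g + mcomp f' g;
  comp_linr : forall X Y Z (f : mor Y Z) (a : K) (g g' : mor X Y),
      mcomp f (a *: g + g') = a *: mcomp f g + mcomp f g';
  tensm_linl : forall X X' Y Y' (g : mor Y Y') (a : K) (f f' : mor X X'),
      tensm (a *: f + f') g = a *: tensm f g + tensm f' g;
  tensm_linr : forall X X' Y Y' (f : mor X X') (a : K) (g g' : mor Y Y'),
      tensm f (a *: g + g') = a *: tensm f g + tensm f g';
  tensm_comp : forall X X' X'' Y Y' Y''
      (f : mor X' X'') (f' : mor X X') (g : mor Y' Y'') (g' : mor Y Y'),
      tensm (mcomp f f') (mcomp g g') = mcomp (tensm f g) (tensm f' g');
  tensm_id : forall X Y, tensm (idm X) (idm Y) = idm (tens X Y);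
  tensA : forall X Y Z, tens (tens X Y) Z = tens X (tens Y Z);
  tens1l : forall X, tens unit_ob X = X;
  tens1r : forall X, tens X unit_ob = X;
  tensmA : forall X X' Y Y' Z Z' (f : mor X X') (g : mor Y Y') (h : mor Z Z'),
      castH (fun A B => (mor A B : Type)) (tensA X Y Z) (tensA X' Y' Z')
        (tensm (tensm f g) h) = tensm f (tensm g h);
  tensm1l : forall X Y (f : mor X Y),
      castH (fun A B => (mor A B : Type)) (tens1l X) (tens1l Y)
        (tensm (idm unit_ob) f) = f;
  tensm1r : forall X Y (f : mor X Y),
      castH (fun A B => (mor A B : Type)) (tens1r X) (tens1r Y)
        (tensm f (idm unit_ob)) = f;
  scal_inj : injective scal;
  scal_surj : forall g : mor unit_ob unit_ob, exists c, g = scal c;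
  scal1 : scal 1 = idm unit_ob;
  scalD : forall a b, scal (a + b) = scal a + scal b;
  scalM : forall a b, scal (a * b) = mcomp (scal a) (scal b);
  scalE : forall X Y (c : K) (f : mor X Y),
      c *: f = castH (fun A B => (mor A B : Type)) (tens1l X) (tens1l Y)
                 (tensm (scal c) f)
}.

Arguments mor {K} s X Y.
Arguments idm {K} s X.
Arguments tens {K} s X Y.
Arguments unit_ob {K} s.
Arguments scal {K} s c.
Arguments tensA {K} s X Y Z.
Arguments tens1l {K} s X.
Arguments tens1r {K} s X.
Arguments mcomp {K} s {X Y Z}.
Arguments tensm {K} s {X X' Y Y'}.

Section PsiDefs.
Variables (K : fieldType) (C : smcat K).

Local Notation hm := (mor C).
Local Notation tn := (tens C).
Local Notation cp := (mcomp C).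
Local Notation tm := (tensm C).
Local Notation idC := (idm C).
Local Notation I1 := (unit_ob C).
Local Notation cast := (castH (fun A B => (mor C A B : Type))).

(* simple object: End(X) = k Id_X (with Id_X <> 0, so that <f> is defined) *)
Definition simple_ob (X : ob C) :=
  (forall f : hm X X, exists c : K, f = c *: idC X) /\ idC X != 0.

Definition scalar_of (X : ob C) (f : hm X X) : K :=
  epsilon (inhabits 0) (fun c : K => f = c *: idC X).

Lemma cast0 X X' Y Y' (e1 : X = X') (e2 : Y = Y') :
  cast e1 e2 (0 : hm X Y) = 0.
Proof. by destruct e1, e2. Qed.

Lemma x_eq0 (X Y : ob C) (t : hm X Y) : t = t + t -> t = 0.
Proof. by rewrite -{1}[t]addr0 => /addrI. Qed.

Lemma tm0l X X' Y Y' (g : hm Y Y') : tm (0 : hm X X') g = 0.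
Proof.
apply: x_eq0; have := @tensm_linl K C X X' Y Y' g 1 0 0.
by rewrite scaler0 scale1r !addr0.
Qed.

Lemma tm0r X X' Y Y' (f : hm X X') : tm f (0 : hm Y Y') = 0.
Proof.
apply: x_eq0; have := @tensm_linr K C X X' Y Y' f 1 0 0.
by rewrite scaler0 scale1r !addr0.
Qed.

Lemma cp0l X Y Z (g : hm X Y) : cp (0 : hm Y Z) g = 0.
Proof.
apply: x_eq0; have := @comp_linl K C X Y Z g 1 0 0.
by rewrite scaler0 scale1r !addr0.
Qed.

Lemma cp0r X Y Z (f : hm Y Z) : cp f (0 : hm X Y) = 0.
Proof.
apply: x_eq0; have := @comp_linr K C X Y Z f 1 0 0.
by rewrite scaler0 scale1r !addr0.
Qed.

Variables (Ix : choiceType) (V : Ix -> ob C) (star : Ix -> Ix)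
  (starK : involutive star)
  (bv : forall i, hm I1 (tn (V i) (V (star i))))
  (dv : forall i, hm (tn (V i) (V (star i))) I1).

(* b_{i*} and d_{i*}, transported along V_{i**} = V_i *)
Definition bvs (i : Ix) : hm I1 (tn (V (star i)) (V i)) :=
  cast erefl (congr1 (fun j => tn (V (star i)) (V j)) (starK i)) (bv (star i)).
Definition dvs (i : Ix) : hm (tn (V (star i)) (V i)) I1 :=
  cast (congr1 (fun j => tn (V (star i)) (V j)) (starK i)) erefl (dv (star i)).

Definition zigzag1 (i : Ix) :=
  cp (cast erefl (tens1r C (V i)) (tm (idC (V i)) (dvs i)))
     (cast (tens1l C (V i)) (tensA C (V i) (V (star i)) (V i))
        (tm (bv i) (idC (V i))))
  = idC (V i).

Definition zigzag2 (i : Ix) :=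
  cp (cast (tensA C (V i) (V (star i)) (V i)) (tens1l C (V i))
        (tm (dv i) (idC (V i))))
     (cast (tens1r C (V i)) erefl (tm (idC (V i)) (bvs i)))
  = idC (V i).

Definition psi_system :=
  [/\ forall i, simple_ob (V i),
      forall i j, i != j -> forall f : hm (V i) (V j), f = 0,
      forall i, zigzag1 i /\ zigzag2 i &
      forall i j, (exists k, exists f : hm (V k) (tn (V i) (V j)), f != 0) ->
        exists s : seq {k : Ix &
                    (hm (V k) (tn (V i) (V j)) * hm (tn (V i) (V j)) (V k))%type},
          idC (tn (V i) (V j)) = \sum_(p <- s) cp (projT2 p).1 (projT2 p).2 ].

(* H = (+)_{i,j,k} H^k_{ij} (+) (+)_{i,j,k} H^{ij}_k : finitely supported
   families; [hat x i j k] = pi^k_{ij} x, [chk x i j k] = pi^{ij}_k x. *)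
Record Hsp := Hel {
  hat : forall i j k : Ix, hm (tn (V i) (V j)) (V k);
  chk : forall i j k : Ix, hm (V k) (tn (V i) (V j));
  hfin : finite_set [set t : Ix * Ix * Ix |
           hat t.1.1 t.1.2 t.2 != 0 \/ chk t.1.1 t.1.2 t.2 != 0]
}.

Definition hform (x y : Hsp) : K :=
  \sum_(i \in [set: Ix]) \sum_(j \in [set: Ix]) \sum_(k \in [set: Ix])
    (scalar_of (cp (hat x i j k) (chk y i j k))
     + scalar_of (cp (hat y i j k) (chk x i j k))).

(* Components of A x (the sum over i is reindexed by a = i^* ):
   (A x)^{ab}_c = (Id_{V_a} (x) pi^b_{a* c} x)(b_a (x) Id_{V_c}),
   (A x)^b_{ac} = (d_a (x) Id_{V_b})(Id_{V_a} (x) pi^{a* b}_c x). *)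
Definition Ahat (x : Hsp) (a c b : Ix) : hm (tn (V a) (V c)) (V b) :=
  cp (cast erefl (tens1l C (V b)) (tm (dv a) (idC (V b))))
     (cast erefl (esym (tensA C (V a) (V (star a)) (V b)))
        (tm (idC (V a)) (chk x (star a) b c))).

Definition Achk (x : Hsp) (a b c : Ix) : hm (V c) (tn (V a) (V b)) :=
  cp (tm (idC (V a)) (hat x (star a) c b))
     (cast (tens1l C (V c)) (tensA C (V a) (V (star a)) (V c))
        (tm (bv a) (idC (V c)))).

(* Components of B x (the sum over j is reindexed by b = j^* ):
   (B x)^{ab}_c = (pi^a_{c b*} x (x) Id_{V_b})(Id_{V_c} (x) b_{b*}),
   (B x)^c_{ab} = (Id_{V_c} (x) d_{b*})(pi^{c b*}_a x (x) Id_{V_b}). *)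
Definition Bchk (x : Hsp) (a b c : Ix) : hm (V c) (tn (V a) (V b)) :=
  cp (tm (hat x c (star b) a) (idC (V b)))
     (cast (tens1r C (V c)) (esym (tensA C (V c) (V (star b)) (V b)))
        (tm (idC (V c)) (bvs b))).

Definition Bhat (x : Hsp) (a b c : Ix) : hm (tn (V a) (V b)) (V c) :=
  cp (cast erefl (tens1r C (V c)) (tm (idC (V c)) (dvs b)))
     (cast erefl (tensA C (V c) (V (star b)) (V b))
        (tm (chk x c (star b) a) (idC (V b)))).

Lemma Afin (x : Hsp) : finite_set [set t : Ix * Ix * Ix |
  Ahat x t.1.1 t.1.2 t.2 != 0 \/ Achk x t.1.1 t.1.2 t.2 != 0].
Proof.
pose f (t : Ix * Ix * Ix) := (star t.1.1, t.2, t.1.2).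
apply: (sub_finite_set _ (finite_image f (hfin x))).
move=> [[a b] c] /= [H|H].
- exists (star a, c, b); last by rewrite /f /= starK.
  right => /=; apply/negP => /eqP E; move: H.
  by rewrite /Ahat E tm0r cast0 cp0r eqxx.
- exists (star a, c, b); last by rewrite /f /= starK.
  left => /=; apply/negP => /eqP E; move: H.
  by rewrite /Achk E tm0r cp0l eqxx.
Qed.

Lemma Bfin (x : Hsp) : finite_set [set t : Ix * Ix * Ix |
  Bhat x t.1.1 t.1.2 t.2 != 0 \/ Bchk x t.1.1 t.1.2 t.2 != 0].
Proof.
pose f (t : Ix * Ix * Ix) := (t.2, star t.1.2, t.1.1).
apply: (sub_finite_set _ (finite_image f (hfin x))).
move=> [[a b] c] /= [H|H].
- exists (c, star b, a); last by rewrite /f /= starK.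
  right => /=; apply/negP => /eqP E; move: H.
  by rewrite /Bhat E tm0l cast0 cp0r eqxx.
- exists (c, star b, a); last by rewrite /f /= starK.
  left => /=; apply/negP => /eqP E; move: H.
  by rewrite /Bchk E tm0l cp0l eqxx.
Qed.

Definition Aop (x : Hsp) : Hsp := @Hel (Ahat x) (Achk x) (Afin x).
Definition Bop (x : Hsp) : Hsp := @Hel (Bhat x) (Bchk x) (Bfin x).

Definition Tf (u v x y : Hsp) : K :=
  \sum_(i \in [set: Ix]) \sum_(j \in [set: Ix]) \sum_(k \in [set: Ix])
  \sum_(l \in [set: Ix]) \sum_(m \in [set: Ix]) \sum_(n \in [set: Ix])
    scalar_of
      (cp (hat u k l m)
       (cp (tm (hat v i j k) (idC (V l)))
        (cp (cast erefl (esym (tensA C (V i) (V j) (V l)))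
               (tm (idC (V i)) (chk x j l n)))
            (chk y i n m)))).

Definition Tbar (u v x y : Hsp) : K :=
  \sum_(i \in [set: Ix]) \sum_(j \in [set: Ix]) \sum_(k \in [set: Ix])
  \sum_(l \in [set: Ix]) \sum_(m \in [set: Ix]) \sum_(n \in [set: Ix])
    scalar_of
      (cp (hat u i n m)
       (cp (tm (idC (V i)) (hat v j l n))
        (cp (cast erefl (tensA C (V i) (V j) (V l))
               (tm (chk x i j k) (idC (V l))))
            (chk y k l m)))).

End PsiDefs.

(* All sums in T, T-bar and the form are finite, so one fixes a finite, star-closed
   list S of indices carrying the supports of every element involved; the sums
   then become list sums that can be reordered freely.
   For (ii) the summands match one by one after the reindexing j |-> j*: the
   zigzag identity b/d lets the vertex of x be bent into (B x) and that of v
   into (A v).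
   For (i), T(u,v,x,-) is the form <W,-> for an explicit W in H-hat, so
   T(u,v,x,A*y) = <A W, y>, and <A W, y> is T-bar(y,u,Av,x) because the
   coevaluation b slides past the vertices of u and v.  Symmetrically for
   (iii), T-bar(v,Bx,y,-) = <Z,-> and <B Z, u> = T(u,v,x,y) by the second
   zigzag identity. *)
From Pilot Require Import Defs.
From HB Require Import structures.
From mathcomp Require Import all_boot all_order all_algebra.
From mathcomp Require Import boolp classical_sets cardinality fsbigop.
From Stdlib Require Import ClassicalEpsilon.

Set Implicit Arguments.
Unset Strict Implicit.
Unset Printing Implicit Defensive.

Import GRing.Theory.
Local Open Scope ring_scope.

Section Coherence.
Variables (K : fieldType) (C : smcat K).

Local Notation hm := (mor C).
Local Notation tn := (tens C).
Local Notation cp := (mcomp C).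
Local Notation tm := (tensm C).
Local Notation idC := (idm C).
Local Notation I1 := (unit_ob C).
Local Notation cast := (castH (fun A B => (mor C A B : Type))).
Local Notation cA := (@Defs.compA _ C _ _ _ _).

(* Since the monoidal structure is strict, associators and unitors are
   identities transported along equalities of objects; [eqmor] makes every
   such transport a composable morphism, so that [cast] can be eliminated. *)
Definition eqmor (X Y : ob C) (e : X = Y) : hm X Y := cast erefl e (idC X).

Lemma eqmor_irr X Y (e e' : X = Y) : eqmor e = eqmor e'.
Proof. by rewrite (Prop_irrelevance e e'). Qed.

Lemma eqmor_id X (e : X = X) : eqmor e = idC X.
Proof. exact: (eqmor_irr e erefl). Qed.

Lemma eqmor_cancel X Y (e1 : X = Y) (e2 : Y = X) : cp (eqmor e2) (eqmor e1) = idC X.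
Proof. by destruct e1; rewrite (eqmor_id e2) comp1m. Qed.

Lemma eqmorK X Y Z (e1 : X = Y) (e2 : Y = Z) :
  cp (eqmor e2) (eqmor e1) = eqmor (etrans e1 e2).
Proof. by destruct e2; rewrite comp1m; apply: eqmor_irr. Qed.

Lemma eqmorKA X Y Z W (e1 : X = Y) (e2 : Y = Z) (f : hm W X) :
  cp (eqmor e2) (cp (eqmor e1) f) = cp (eqmor (etrans e1 e2)) f.
Proof. by rewrite cA eqmorK. Qed.

Lemma castE X X' Y Y' (e1 : X = X') (e2 : Y = Y') (f : hm X Y) :
  cast e1 e2 f = cp (eqmor e2) (cp f (eqmor (esym e1))).
Proof. by destruct e1, e2; rewrite /= comp1m compm1. Qed.

Lemma cast_tgtE X Y Y' (e : Y = Y') (f : hm X Y) : cast erefl e f = cp (eqmor e) f.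
Proof. by rewrite castE compm1. Qed.

Lemma cast_srcE X X' Y (e : X = X') (f : hm X Y) :
  cast e erefl f = cp f (eqmor (esym e)).
Proof. by rewrite castE comp1m. Qed.

Lemma tensm_eqmorl X X' Y (e : X = X') :
  tm (eqmor e) (idC Y) = eqmor (congr1 (tn^~ Y) e).
Proof. by destruct e; rewrite /eqmor /= tensm_id. Qed.

Lemma tensm_eqmorr X Y Y' (e : Y = Y') :
  tm (idC X) (eqmor e) = eqmor (congr1 (tn X) e).
Proof. by destruct e; rewrite /eqmor /= tensm_id. Qed.

Lemma tensm_splitr X X' Y Y' (f : hm X X') (g : hm Y Y') :
  tm f g = cp (tm f (idC Y')) (tm (idC X) g).
Proof. by rewrite -tensm_comp comp1m compm1. Qed.

Lemma tensm_splitl X X' Y Y' (f : hm X X') (g : hm Y Y') :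
  tm f g = cp (tm (idC X') g) (tm f (idC Y)).
Proof. by rewrite -tensm_comp comp1m compm1. Qed.

Lemma tensm_compl X X' X'' Y (f : hm X' X'') (f' : hm X X') :
  tm (cp f f') (idC Y) = cp (tm f (idC Y)) (tm f' (idC Y)).
Proof. by rewrite -tensm_comp comp1m. Qed.

Lemma tensm_compr X Y Y' Y'' (g : hm Y' Y'') (g' : hm Y Y') :
  tm (idC X) (cp g g') = cp (tm (idC X) g) (tm (idC X) g').
Proof. by rewrite -tensm_comp comp1m. Qed.

Lemma comp2_fold {X Y Z W} {f : hm Z W} {g : hm Y Z} {h : hm Y W} {r : hm X Y} :
  cp f g = h -> cp f (cp g r) = cp h r.
Proof. by move=> <-; rewrite cA. Qed.

Lemma comp2_congr {X Y Z W U} {f : hm W U} {g : hm Z W} {f' : hm Y U} {g' : hm Z Y}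
    {r : hm X Z} :
  cp f g = cp f' g' -> cp f (cp g r) = cp f' (cp g' r).
Proof. by move=> E; rewrite !cA E. Qed.

Lemma comp3_fold {X Y Z W U} {f : hm W U} {g : hm Z W} {h : hm Y Z} {k : hm Y U}
    {r : hm X Y} :
  cp f (cp g h) = k -> cp f (cp g (cp h r)) = cp k r.
Proof. by move=> <-; rewrite !cA. Qed.

Lemma eqmor_tensmA X X' Y Y' Z Z' (f : hm X X') (g : hm Y Y') (h : hm Z Z')
    (e : tn (tn X Y) Z = tn X (tn Y Z)) (e' : tn (tn X' Y') Z' = tn X' (tn Y' Z')) :
  cp (eqmor e') (tm (tm f g) h) = cp (tm f (tm g h)) (eqmor e).
Proof.
rewrite -(tensmA f g h) castE -!cA eqmor_cancel compm1.
by rewrite (eqmor_irr e' (tensA C X' Y' Z')).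
Qed.

Lemma tensmA_conj X X' Y Y' Z Z' (f : hm X X') (g : hm Y Y') (h : hm Z Z')
    (e : tn (tn X Y) Z = tn X (tn Y Z)) (e' : tn (tn X' Y') Z' = tn X' (tn Y' Z')) :
  tm (tm f g) h = cp (eqmor (esym e')) (cp (tm f (tm g h)) (eqmor e)).
Proof. by rewrite -(eqmor_tensmA f g h e e') cA eqmor_cancel comp1m. Qed.

Lemma eqmor_tensmAV X X' Y Y' Z Z' (f : hm X X') (g : hm Y Y') (h : hm Z Z')
    (e : tn X (tn Y Z) = tn (tn X Y) Z) (e' : tn X' (tn Y' Z') = tn (tn X' Y') Z') :
  cp (eqmor e') (tm f (tm g h)) = cp (tm (tm f g) h) (eqmor e).
Proof.
rewrite (tensmA_conj f g h (esym e) (esym e')) -!cA eqmor_cancel compm1.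
by congr (cp _ _); apply: eqmor_irr.
Qed.

Lemma tensm_idA_conj X Y Z Z' (g : hm Z Z') (e : tn (tn X Y) Z = tn X (tn Y Z))
    (e' : tn (tn X Y) Z' = tn X (tn Y Z')) :
  tm (idC (tn X Y)) g = cp (eqmor (esym e')) (cp (tm (idC X) (tm (idC Y) g)) (eqmor e)).
Proof. by rewrite -tensm_id (tensmA_conj _ _ _ e e'). Qed.

Lemma eqmor_tensm1l X Y (f : hm X Y) (eX : tn I1 X = X) (eY : tn I1 Y = Y) :
  cp (eqmor eY) (tm (idC I1) f) = cp f (eqmor eX).
Proof.
rewrite -{2}(tensm1l f) castE -!cA eqmor_cancel compm1.
by rewrite (eqmor_irr eY (tens1l C Y)).
Qed.

Lemma eqmor_tensm1r X Y (f : hm X Y) (eX : tn X I1 = X) (eY : tn Y I1 = Y) :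
  cp (eqmor eY) (tm f (idC I1)) = cp f (eqmor eX).
Proof.
rewrite -{2}(tensm1r f) castE -!cA eqmor_cancel compm1.
by rewrite (eqmor_irr eY (tens1r C Y)).
Qed.

Lemma tensm1l_conj X Y (f : hm X Y) (eX : tn I1 X = X) (eY : tn I1 Y = Y) :
  tm (idC I1) f = cp (eqmor (esym eY)) (cp f (eqmor eX)).
Proof. by rewrite -(eqmor_tensm1l f eX eY) cA eqmor_cancel comp1m. Qed.

Lemma tensm1r_conj X Y (f : hm X Y) (eX : tn X I1 = X) (eY : tn Y I1 = Y) :
  tm f (idC I1) = cp (eqmor (esym eY)) (cp f (eqmor eX)).
Proof. by rewrite -(eqmor_tensm1r f eX eY) cA eqmor_cancel comp1m. Qed.

Lemma tensm1l_eqmor X Y (f : hm X Y) (eX : X = tn I1 X) (eY : Y = tn I1 Y) :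
  cp (tm (idC I1) f) (eqmor eX) = cp (eqmor eY) f.
Proof.
rewrite (tensm1l_conj f (esym eX) (esym eY)) -!cA eqmor_cancel compm1.
by congr (cp _ _); apply: eqmor_irr.
Qed.

Lemma tensm1r_eqmor X Y (f : hm X Y) (eX : X = tn X I1) (eY : Y = tn Y I1) :
  cp (tm f (idC I1)) (eqmor eX) = cp (eqmor eY) f.
Proof.
rewrite (tensm1r_conj f (esym eX) (esym eY)) -!cA eqmor_cancel compm1.
by congr (cp _ _); apply: eqmor_irr.
Qed.

Lemma eqmor_solve X Y Z W (a : Y = W) (b : Z = X) (M : hm X Y) (t : hm Z W) :
  cp (eqmor a) (cp M (eqmor b)) = t -> M = cp (eqmor (esym a)) (cp t (eqmor (esym b))).
Proof. by move=> <-; rewrite -!cA eqmor_cancel compm1 cA eqmor_cancel comp1m. Qed.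

Lemma eqmor_solve_mid X Y Z W U U' (a : Y = W) (b : Z = X) (q : U = U')
    (f : hm U' Y) (g : hm X U) (t : hm Z W) :
  cp (eqmor a) (cp f (cp (eqmor q) (cp g (eqmor b)))) = t ->
  cp f (cp (eqmor q) g) = cp (eqmor (esym a)) (cp t (eqmor (esym b))).
Proof. by move=> H; apply: eqmor_solve; rewrite -!cA. Qed.

Lemma tensm_idl_fuse X Y Y' Z W U (f : hm Y' Z) (g : hm W Y) (e : tn X Y = tn X Y')
    (e0 : Y = Y') (r : hm U (tn X W)) :
  cp (tm (idC X) f) (cp (eqmor e) (cp (tm (idC X) g) r))
  = cp (tm (idC X) (cp f (cp (eqmor e0) g))) r.
Proof. by rewrite !tensm_compr tensm_eqmorr -!cA (eqmor_irr e (congr1 (tn X) e0)). Qed.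


Lemma zigzag1_tensr (J Js L : ob C) (b : hm I1 (tn J Js)) (d : hm (tn Js J) I1)
    (zz : cp (cast erefl (tens1r C J) (tm (idC J) d))
             (cast (tens1l C J) (tensA C J Js J) (tm b (idC J))) = idC J)
    (e1 : tn (tn J Js) (tn J L) = tn J (tn (tn Js J) L))
    (e2 : tn I1 (tn J L) = tn J (tn I1 L)) :
  cp (tm (idC J) (tm d (idC L))) (cp (eqmor e1) (tm b (idC (tn J L)))) = eqmor e2.
Proof.
have H := congr1 (fun f => tm f (idC L)) zz; cbv beta in H; move: H.
rewrite tensm_id.
rewrite cast_tgtE castE -!cA !tensm_compl.
rewrite (tensmA_conj (idC J) d (idC L) (tensA C J (tn Js J) L) (tensA C J I1 L)).
rewrite (tensmA_conj b (idC J) (idC L) (tensA C I1 J L) (tensA C (tn J Js) J L)).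
rewrite !tensm_id !tensm_eqmorl -!cA !eqmorKA eqmorK => /eqmor_solve_mid zz_L.
rewrite (eqmor_irr e1 (etrans (esym (tensA C (tn J Js) J L))
  (etrans (congr1 (tn^~ L) (tensA C J Js J)) (tensA C J (tn Js J) L)))).
by rewrite zz_L comp1m eqmorK; apply: eqmor_irr.
Qed.

Lemma zigzag1_cancel (J Js L N : ob C) (c : hm N (tn J L))
    (b : hm I1 (tn J Js)) (d : hm (tn Js J) I1)
    (zz : cp (cast erefl (tens1r C J) (tm (idC J) d))
             (cast (tens1l C J) (tensA C J Js J) (tm b (idC J))) = idC J) :
  cp (tm (idC J) (cp (cast erefl (tens1l C L) (tm d (idC L)))
                     (cast erefl (esym (tensA C Js J L)) (tm (idC Js) c))))
     (cp (eqmor (tensA C J Js N)) (tm b (idC N)))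
  = cp c (eqmor (tens1l C N)).
Proof.
rewrite !cast_tgtE !tensm_compr -!cA.
rewrite (comp2_congr (esym (eqmor_tensmA (idC J) (idC Js) c
  (tensA C J Js N) (tensA C J Js (tn J L))))).
rewrite tensm_id -(tensm_splitl b c) (tensm_splitr b c) !tensm_eqmorr !eqmorKA.
rewrite (comp3_fold (zigzag1_tensr zz _
  (etrans (tens1l C (tn J L)) (congr1 (tn J) (esym (tens1l C L)))))).
rewrite (tensm1l_conj c (tens1l C N) (tens1l C (tn J L))) !eqmorKA.
by rewrite eqmor_id comp1m.
Qed.

Lemma zigzag1_exchange (I J Js Q L N : ob C) (h : hm (tn I J) Q) (c : hm N (tn J L))
    (b : hm I1 (tn J Js)) (d : hm (tn Js J) I1)
    (zz : cp (cast erefl (tens1r C J) (tm (idC J) d))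
             (cast (tens1l C J) (tensA C J Js J) (tm b (idC J))) = idC J) :
  cp (tm h (idC L)) (cast erefl (esym (tensA C I J L)) (tm (idC I) c))
  = cp (tm (idC Q) (cp (cast erefl (tens1l C L) (tm d (idC L)))
                       (cast erefl (esym (tensA C Js J L)) (tm (idC Js) c))))
       (cast erefl (tensA C Q Js N)
          (tm (cp (tm h (idC Js)) (cast (tens1r C I) (esym (tensA C I J Js))
                                      (tm (idC I) b)))
              (idC N))).
Proof.
set Ac := cp (cast erefl _ _) _.
rewrite !cast_tgtE castE !tensm_compl -?cA.
rewrite (comp2_congr (eqmor_tensmA h (idC Js) (idC N)
  (tensA C (tn I J) Js N) (tensA C Q Js N))).
rewrite tensm_id -(comp2_congr (etrans (esym (tensm_splitr h Ac)) (tensm_splitl h Ac))).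
congr (cp _ _).
rewrite (tensm_idA_conj Ac (tensA C I J (tn Js N)) (tensA C I J L)).
rewrite (tensmA_conj (idC I) b (idC N) (tensA C I I1 N) (tensA C I (tn J Js) N)).
rewrite !tensm_eqmorl -!cA !eqmorKA.
congr (cp _ _).
rewrite (tensm_idl_fuse _ _ _ (tensA C J Js N)) zigzag1_cancel //.
by rewrite !tensm_compr !tensm_eqmorr -!cA !eqmorKA eqmorK eqmor_id compm1.
Qed.

Lemma zigzag2_cancel (J N L Ls Lss : ob C) (c : hm J (tn N Lss)) (d : hm (tn Lss Ls) I1)
    (b : hm I1 (tn Ls L)) (t : hm Lss L)
    (zz : cp (cast (tensA C Lss Ls L) (tens1l C L) (tm d (idC L)))
             (cast (tens1r C Lss) erefl (tm (idC Lss) b)) = t) :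
  cp (tm (cp (cast erefl (tens1r C N) (tm (idC N) d))
             (cast erefl (tensA C N Lss Ls) (tm c (idC Ls)))) (idC L))
     (cp (eqmor (esym (tensA C J Ls L))) (tm (idC J) b))
  = cp (tm (idC N) t) (cp c (eqmor (tens1r C J))).
Proof.
move: zz; rewrite castE cast_srcE -!cA => /eqmor_solve_mid zz.
rewrite !cast_tgtE !tensm_compl -!cA.
rewrite (comp2_congr (esym (eqmor_tensmAV c (idC Ls) (idC L)
  (esym (tensA C J Ls L)) (esym (tensA C (tn N Lss) Ls L))))).
rewrite tensm_id -(tensm_splitr c b) (tensm_splitl c b).
rewrite (tensmA_conj (idC N) d (idC L) (tensA C N (tn Lss Ls) L) (tensA C N I1 L)).
rewrite (tensm_idA_conj b (tensA C N Lss I1) (tensA C N Lss (tn Ls L))).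
rewrite !tensm_eqmorl -!cA !eqmorKA.
rewrite (tensm_idl_fuse _ _ _ (esym (tensA C Lss Ls L))) zz.
rewrite (tensm1r_conj c (tens1r C J) (tens1r C (tn N Lss))).
rewrite !tensm_compr !tensm_eqmorr -!cA !eqmorKA.
by rewrite !eqmor_id !comp1m.
Qed.

Lemma zigzag2_exchange (I N Q J M L Ls Lss : ob C) (h : hm (tn I N) Q)
    (c : hm M (tn I J)) (c' : hm J (tn N Lss)) (d : hm (tn Lss Ls) I1)
    (b : hm I1 (tn Ls L)) (t : hm Lss L)
    (zz : cp (cast (tensA C Lss Ls L) (tens1l C L) (tm d (idC L)))
             (cast (tens1r C Lss) erefl (tm (idC Lss) b)) = t) :
  cp (tm (cp h (cp (tm (idC I) (cp (cast erefl (tens1r C N) (tm (idC N) d))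
                                   (cast erefl (tensA C N Lss Ls) (tm c' (idC Ls)))))
                   (cast erefl (tensA C I J Ls) (tm c (idC Ls))))) (idC L))
     (cast (tens1r C M) (esym (tensA C M Ls L)) (tm (idC M) b))
  = cp (tm h (idC L)) (cp (cast erefl (esym (tensA C I N L))
                              (tm (idC I) (cp (tm (idC N) t) c'))) c).
Proof.
set Bc := cp (cast erefl _ _) _.
rewrite !cast_tgtE castE !tensm_compl -!cA.
congr (cp _ _).
rewrite -(comp2_congr (eqmor_tensmAV c (idC Ls) (idC L)
  (esym (tensA C M Ls L)) (esym (tensA C (tn I J) Ls L)))).
rewrite tensm_id (comp2_fold (esym (tensm_splitr c b))) (tensm_splitl c b) -cA.
rewrite (tensm1r_eqmor c (esym (tens1r C M)) (esym (tens1r C (tn I J)))).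
rewrite (tensmA_conj (idC I) Bc (idC L) (tensA C I (tn J Ls) L) (tensA C I N L)).
rewrite (tensm_idA_conj b (tensA C I J I1) (tensA C I J (tn Ls L))).
rewrite !tensm_eqmorl -!cA !eqmorKA.
rewrite (tensm_idl_fuse _ _ _ (esym (tensA C J Ls L))) (zigzag2_cancel c' zz).
by rewrite !tensm_compr !tensm_eqmorr -!cA !eqmorKA eqmor_id comp1m.
Qed.

Lemma coev_slide (A As J L M Q B : ob C) (b : hm I1 (tn A As)) (h : hm (tn As J) Q)
    (h' : hm (tn Q L) B) (c : hm M (tn J L)) :
  cp (tm (idC A) (cp h' (cp (tm h (idC L))
                            (cast erefl (esym (tensA C As J L)) (tm (idC As) c)))))
     (cast (tens1l C M) (tensA C A As M) (tm b (idC M)))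
  = cp (tm (idC A) h')
       (cp (cast erefl (tensA C A Q L)
              (tm (cp (tm (idC A) h) (cast (tens1l C J) (tensA C A As J) (tm b (idC J))))
                  (idC L)))
           c).
Proof.
rewrite !cast_tgtE !castE !tensm_compr !tensm_compl -!cA.
rewrite (comp2_congr (eqmor_tensmA _ h (idC L) (tensA C A (tn As J) L) (tensA C A Q L))).
congr (cp _ (cp _ _)).
rewrite (comp2_congr (esym (eqmor_tensmA (idC A) (idC As) c
  (tensA C A As M) (tensA C A As (tn J L))))).
rewrite tensm_id (comp2_fold (esym (tensm_splitl b c))) (tensm_splitr b c) -cA.
rewrite (tensm1l_eqmor c (esym (tens1l C M)) (esym (tens1l C (tn J L)))).
rewrite (tensmA_conj b (idC J) (idC L) (tensA C I1 J L) (tensA C (tn A As) J L)) tensm_id.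
rewrite !tensm_eqmorl tensm_eqmorr -!cA !eqmorKA.
by f_equal; [|f_equal; f_equal]; apply: eqmor_irr.
Qed.
End Coherence.

Section Linearity.
Variables (K : fieldType) (C : smcat K).

Local Notation hm := (mor C).
Local Notation cp := (mcomp C).
Local Notation tm := (tensm C).
Local Notation idC := (idm C).

Lemma compDl X Y Z (f f' : hm Y Z) (g : hm X Y) : cp (f + f') g = cp f g + cp f' g.
Proof. by have := comp_linl g 1 f f'; rewrite !scale1r. Qed.

Lemma compDr X Y Z (f : hm Y Z) (g g' : hm X Y) : cp f (g + g') = cp f g + cp f g'.
Proof. by have := comp_linr f 1 g g'; rewrite !scale1r. Qed.

Lemma tensmDl X X' Y Y' (f f' : hm X X') (g : hm Y Y') : tm (f + f') g = tm f g + tm f' g.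
Proof. by have := tensm_linl g 1 f f'; rewrite !scale1r. Qed.

Lemma tensmDr X X' Y Y' (f : hm X X') (g g' : hm Y Y') : tm f (g + g') = tm f g + tm f g'.
Proof. by have := tensm_linr f 1 g g'; rewrite !scale1r. Qed.

Section Sum3.
Variables (I : Type) (s1 s2 s3 : seq I).

Lemma comp_suml3 X Y Z (F : I -> I -> I -> hm Y Z) (g : hm X Y) :
  cp (\sum_(a <- s1) \sum_(b <- s2) \sum_(c <- s3) F a b c) g
  = \sum_(a <- s1) \sum_(b <- s2) \sum_(c <- s3) cp (F a b c) g.
Proof.
pose sumg := big_morph (cp^~ g) (fun f f' => compDl f f' g) (cp0l _ g).
by rewrite sumg; apply: eq_bigr => a _; rewrite sumg; apply: eq_bigr => b _; rewrite sumg.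
Qed.

Lemma comp_sumr3 X Y Z (f : hm Y Z) (G : I -> I -> I -> hm X Y) :
  cp f (\sum_(a <- s1) \sum_(b <- s2) \sum_(c <- s3) G a b c)
  = \sum_(a <- s1) \sum_(b <- s2) \sum_(c <- s3) cp f (G a b c).
Proof.
pose sumf := big_morph (cp f) (compDr f) (cp0r _ f).
by rewrite sumf; apply: eq_bigr => a _; rewrite sumf; apply: eq_bigr => b _; rewrite sumf.
Qed.

Lemma tensm_suml3 X X' Y Y' (F : I -> I -> I -> hm X X') (g : hm Y Y') :
  tm (\sum_(a <- s1) \sum_(b <- s2) \sum_(c <- s3) F a b c) g
  = \sum_(a <- s1) \sum_(b <- s2) \sum_(c <- s3) tm (F a b c) g.
Proof.
pose sumg := big_morph (tm^~ g) (fun f f' => tensmDl f f' g) (tm0l _ _ g).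
by rewrite sumg; apply: eq_bigr => a _; rewrite sumg; apply: eq_bigr => b _; rewrite sumg.
Qed.

Lemma tensm_sumr3 X X' Y Y' (f : hm X X') (G : I -> I -> I -> hm Y Y') :
  tm f (\sum_(a <- s1) \sum_(b <- s2) \sum_(c <- s3) G a b c)
  = \sum_(a <- s1) \sum_(b <- s2) \sum_(c <- s3) tm f (G a b c).
Proof.
pose sumf := big_morph (tm f) (tensmDr f) (tm0r _ _ f).
by rewrite sumf; apply: eq_bigr => a _; rewrite sumf; apply: eq_bigr => b _; rewrite sumf.
Qed.

End Sum3.

Section ScalarOf.
Variables (X : ob C) (sX : simple_ob X).

Lemma scalar_ofP (f : hm X X) : f = scalar_of f *: idC X.
Proof.
apply: (epsilon_spec (inhabits 0) (fun c : K => f = c *: idC X)).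
by case: sX => /(_ f).
Qed.

Lemma scalar_of_eq (f : hm X X) c : f = c *: idC X -> scalar_of f = c.
Proof.
move=> E; have := scalar_ofP f; rewrite {1}E => /eqP.
rewrite -subr_eq0 -scalerBl scaler_eq0.
by case: sX => _ /negPf ->; rewrite orbF subr_eq0 => /eqP.
Qed.

Lemma scalar_of0 : scalar_of (0 : hm X X) = 0.
Proof. by apply: scalar_of_eq; rewrite scale0r. Qed.

Lemma scalar_ofD (f g : hm X X) : scalar_of (f + g) = scalar_of f + scalar_of g.
Proof. by apply: scalar_of_eq; rewrite scalerDl -!scalar_ofP. Qed.

Lemma scalar_of_sum3 (I : Type) (s1 s2 s3 : seq I) (F : I -> I -> I -> hm X X) :
  scalar_of (\sum_(a <- s1) \sum_(b <- s2) \sum_(c <- s3) F a b c)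
  = \sum_(a <- s1) \sum_(b <- s2) \sum_(c <- s3) scalar_of (F a b c).
Proof.
pose sumS := big_morph (@scalar_of K C X) scalar_ofD scalar_of0.
by rewrite sumS; apply: eq_bigr => a _; rewrite sumS; apply: eq_bigr => b _; rewrite sumS.
Qed.

End ScalarOf.
End Linearity.

Local Open Scope classical_set_scope.

Section SupportedSums.
Variables (K : fieldType) (Ix : choiceType) (S : seq Ix).
Hypothesis S_uniq : uniq S.

Lemma fsbig_seq (F G : Ix -> K) : F =1 G -> (forall i, i \notin S -> G i = 0) ->
  \sum_(i \in [set: Ix]) F i = \sum_(i <- S) G i.
Proof.
move=> FG G0; rewrite (fsbigE S) //; last by move=> i _ /G0; rewrite FG.
by rewrite big_mkcond /=; apply: eq_bigr => i _; rewrite in_setT FG.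
Qed.

Lemma fsbig3_seq (T : Ix -> Ix -> Ix -> K) :
  (forall i j k, ~~ [&& i \in S, j \in S & k \in S] -> T i j k = 0) ->
  \sum_(i \in [set: Ix]) \sum_(j \in [set: Ix]) \sum_(k \in [set: Ix]) T i j k
  = \sum_(i <- S) \sum_(j <- S) \sum_(k <- S) T i j k.
Proof.
move=> T0; apply: fsbig_seq => [i|i iS]; last first.
  by rewrite big1 // => j _; rewrite big1 // => k _; apply: T0; rewrite (negPf iS).
apply: fsbig_seq => [j|j jS]; last first.
  by rewrite big1 // => k _; apply: T0; rewrite (negPf jS) andbF.
by apply: fsbig_seq => [k|k kS] //; apply: T0; rewrite (negPf kS) !andbF.
Qed.

Lemma fsbig6_seq (T : Ix -> Ix -> Ix -> Ix -> Ix -> Ix -> K) :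
  (forall i j k l m n, ~~ [&& i \in S, j \in S, k \in S, l \in S, m \in S & n \in S] ->
     T i j k l m n = 0) ->
  \sum_(i \in [set: Ix]) \sum_(j \in [set: Ix]) \sum_(k \in [set: Ix])
  \sum_(l \in [set: Ix]) \sum_(m \in [set: Ix]) \sum_(n \in [set: Ix]) T i j k l m n
  = \sum_(i <- S) \sum_(j <- S) \sum_(k <- S) \sum_(l <- S) \sum_(m <- S) \sum_(n <- S)
      T i j k l m n.
Proof.
move=> T0; transitivity (\sum_(i <- S) \sum_(j <- S) \sum_(k <- S)
  \sum_(l \in [set: Ix]) \sum_(m \in [set: Ix]) \sum_(n \in [set: Ix]) T i j k l m n).
  apply: fsbig3_seq => i j k ijk_out.
  apply: fsbig1 => l _; apply: fsbig1 => m _; apply: fsbig1 => n _; apply: T0.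
  by apply: contra ijk_out => /and5P[-> -> ->].
apply: eq_big_seq => i iS; apply: eq_big_seq => j jS; apply: eq_big_seq => k kS.
by apply: fsbig3_seq => l m n lmn_out; apply: T0; rewrite iS jS kS.
Qed.

Lemma big_rotr3 (F : Ix -> Ix -> Ix -> K) :
  \sum_(a <- S) \sum_(b <- S) \sum_(c <- S) F a b c
  = \sum_(c <- S) \sum_(a <- S) \sum_(b <- S) F a b c.
Proof. by under eq_bigr => a _ do rewrite exchange_big; rewrite exchange_big. Qed.

Lemma big_rotr4 (F : Ix -> Ix -> Ix -> Ix -> K) :
  \sum_(a <- S) \sum_(b <- S) \sum_(c <- S) \sum_(d <- S) F a b c d
  = \sum_(d <- S) \sum_(a <- S) \sum_(b <- S) \sum_(c <- S) F a b c d.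
Proof. by under eq_bigr => a _ do rewrite big_rotr3; rewrite exchange_big. Qed.

Lemma big_rotr5 (F : Ix -> Ix -> Ix -> Ix -> Ix -> K) :
  \sum_(a <- S) \sum_(b <- S) \sum_(c <- S) \sum_(d <- S) \sum_(e <- S) F a b c d e
  = \sum_(e <- S) \sum_(a <- S) \sum_(b <- S) \sum_(c <- S) \sum_(d <- S) F a b c d e.
Proof. by under eq_bigr => a _ do rewrite big_rotr4; rewrite exchange_big. Qed.

End SupportedSums.

Section PsiSystem.
Variables (K : fieldType) (C : smcat K) (Ix : choiceType)
  (V : Ix -> ob C) (star : Ix -> Ix) (starK : involutive star)
  (bv : forall i, mor C (unit_ob C) (tens C (V i) (V (star i))))
  (dv : forall i, mor C (tens C (V i) (V (star i))) (unit_ob C)).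
Hypothesis V_simple : forall i, simple_ob (V i).
Hypothesis V_zigzag : forall i, zigzag1 starK bv dv i /\ zigzag2 starK bv dv i.

Local Notation hm := (mor C).
Local Notation tn := (tens C).
Local Notation cp := (mcomp C).
Local Notation tm := (tensm C).
Local Notation idC := (idm C).
Local Notation cast := (castH (fun A B => (mor C A B : Type))).
Local Notation cA := (@Defs.compA _ C _ _ _ _).
Local Notation A := (Aop starK bv dv).
Local Notation B := (Bop starK bv dv).

Lemma dv_transport (a b : Ix) (e : a = b) :
  dv a = cp (dv b) (eqmor (congr1 (fun t => tn (V t) (V (star t))) e)).
Proof. by destruct e; rewrite eqmor_id compm1. Qed.

Lemma chk_transport (z : Hsp V) (a b : Ix) (e : a = b) n j :
  chk z n b j = cp (tm (idC (V n)) (eqmor (congr1 V e))) (chk z n a j).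
Proof. by destruct e; rewrite eqmor_id tensm_id comp1m. Qed.

Lemma zigzag1_star j :
  cp (cast erefl (tens1r C (V (star j))) (tm (idC (V (star j))) (dv j)))
     (cast (tens1l C (V (star j))) (tensA C (V (star j)) (V j) (V (star j)))
        (tm (bvs starK bv j) (idC (V (star j)))))
  = idC (V (star j)).
Proof.
have [zz _] := V_zigzag (star j); move: zz; rewrite /zigzag1 /dvs /bvs.
rewrite (dv_transport (starK j)) !cast_tgtE cast_srcE !castE !tensm_compr !tensm_compl.
rewrite !tensm_eqmorr !tensm_eqmorl -!cA !eqmorKA => zz; rewrite -[RHS]zz.
by f_equal; f_equal; f_equal; apply: eqmor_irr.
Qed.

Lemma zigzag2_star j :
  cp (cast (tensA C (V (star (star j))) (V (star j)) (V j)) (tens1l C (V j))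
        (tm (dvs starK dv (star j)) (idC (V j))))
     (cast (tens1r C (V (star (star j)))) erefl
        (tm (idC (V (star (star j)))) (bvs starK bv j)))
  = eqmor (congr1 V (starK j)).
Proof.
have [_ zz] := V_zigzag j; move: zz; rewrite /zigzag2 castE cast_srcE -!cA => zz.
rewrite /dvs (dv_transport (starK j)) cast_srcE castE cast_srcE -!cA !tensm_compl.
rewrite !tensm_eqmorl -!cA !eqmorKA.
rewrite [X in cp _ (cp _ (cp X _))](eqmor_irr _
  (etrans (congr1 (tn^~ (tn (V (star j)) (V j))) (congr1 V (starK j)))
          (esym (tensA C (V j) (V (star j)) (V j))))) -eqmorK.
rewrite -cA -(tensm_eqmorl (tn (V (star j)) (V j)) (congr1 V (starK j))).
rewrite (comp2_fold (esym (tensm_splitr _ (bvs starK bv j)))).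
rewrite (tensm_splitl _ (bvs starK bv j)) -cA.
rewrite (tensm1r_eqmor _ (esym (tens1r C (V (star (star j))))) (esym (tens1r C (V j)))).
rewrite !cA -[RHS]comp1m -[in RHS]zz -!cA.
by repeat f_equal; apply: Prop_irrelevance.
Qed.

Section Supported.
Variable S : seq Ix.
Hypothesis S_uniq : uniq S.
Hypothesis S_star : forall i, i \in S -> star i \in S.

Lemma mem_star i : (star i \in S) = (i \in S).
Proof. by apply/idP/idP => [/S_star|/S_star //]; rewrite starK. Qed.

Lemma big_star (F : Ix -> K) : \sum_(j <- S) F j = \sum_(j <- S) F (star j).
Proof.
have star_inj : injective star by exact: (can_inj starK).
have S_perm : perm_eq (map star S) S.
  apply: uniq_perm => //; first by rewrite map_inj_uniq.
  by move=> a; rewrite -{1}(starK a) mem_map // mem_star.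
by rewrite -(perm_big _ S_perm) big_map.
Qed.

Definition supported (z : Hsp V) := forall i j k, ~~ [&& i \in S, j \in S & k \in S] ->
  hat z i j k = 0 /\ chk z i j k = 0.

Lemma hat_supported z : supported z ->
  forall i j k, ~~ [&& i \in S, j \in S & k \in S] -> hat z i j k = 0.
Proof. by move=> zS i j k /zS []. Qed.

Lemma chk_supported z : supported z ->
  forall i j k, ~~ [&& i \in S, j \in S & k \in S] -> chk z i j k = 0.
Proof. by move=> zS i j k /zS []. Qed.

Lemma supported_Aop z : supported z -> supported (A z).
Proof.
move=> zS a b c abc_out; rewrite /= /Ahat /Achk.
rewrite (chk_supported zS) ?(hat_supported zS) ?tm0r ?cast0 ?cp0r ?cp0l //;
  by move: abc_out; rewrite mem_star; case: (a \in S); case: (b \in S); case: (c \in S).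
Qed.

Lemma supported_Bop z : supported z -> supported (B z).
Proof.
move=> zS a b c abc_out; rewrite /= /Bhat /Bchk.
rewrite (chk_supported zS) ?(hat_supported zS) ?tm0l ?cast0 ?cp0r ?cp0l //;
  by move: abc_out; rewrite mem_star; case: (a \in S); case: (b \in S); case: (c \in S).
Qed.

Lemma hat_only_fin (F : forall i j k, hm (tn (V i) (V j)) (V k)) :
    (forall i j k, ~~ [&& i \in S, j \in S & k \in S] -> F i j k = 0) ->
  finite_set [set t : Ix * Ix * Ix |
    F t.1.1 t.1.2 t.2 != 0 \/ (0 : hm (V t.2) (tn (V t.1.1) (V t.1.2))) != 0].
Proof.
move=> F0; apply: (sub_finite_set _ (finite_seq
  [seq (ab, c) | ab <- [seq (a, b) | a <- S, b <- S], c <- S])).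
move=> [[a b] c] /= [Fabc|]; last by rewrite eqxx.
have /and3P[aS bS cS] : [&& a \in S, b \in S & c \in S].
  by apply: contraNT Fabc => /F0 ->.
by apply: allpairs_f => //; apply: allpairs_f.
Qed.

Definition hat_only (F : forall i j k, hm (tn (V i) (V j)) (V k))
    (F0 : forall i j k, ~~ [&& i \in S, j \in S & k \in S] -> F i j k = 0) : Hsp V :=
  @Hel _ _ _ V F (fun _ _ _ => 0) (hat_only_fin F0).

Lemma supported_hat_only F F0 : supported (@hat_only F F0).
Proof. by move=> i j k /F0. Qed.

Lemma hform_seq x y : supported x -> supported y ->
  hform x y = \sum_(i <- S) \sum_(j <- S) \sum_(k <- S)
    (scalar_of (cp (hat x i j k) (chk y i j k)) + scalar_of (cp (hat y i j k) (chk x i j k))).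
Proof.
move=> xS yS; apply: fsbig3_seq => // i j k ijk_out.
rewrite (hat_supported xS) // (hat_supported yS) // !cp0l.
by rewrite (scalar_of0 (V_simple _)) addr0.
Qed.

Lemma Tf_seq u v x y : supported u -> supported v -> supported x ->
  Tf u v x y = \sum_(i <- S) \sum_(j <- S) \sum_(k <- S)
    \sum_(l <- S) \sum_(m <- S) \sum_(n <- S)
    scalar_of
      (cp (hat u k l m)
       (cp (tm (hat v i j k) (idC (V l)))
        (cp (cast erefl (esym (tensA C (V i) (V j) (V l)))
               (tm (idC (V i)) (chk x j l n)))
            (chk y i n m)))).
Proof.
move=> uS vS xS; apply: fsbig6_seq => // i j k l m n out.
have [/and3P[kS lS mS]|/(hat_supported uS)->] := boolP [&& k \in S, l \in S & m \in S];
  last by rewrite cp0l (scalar_of0 (V_simple _)).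
have [/and3P[iS jS _]|/(hat_supported vS)->] := boolP [&& i \in S, j \in S & k \in S];
  last by rewrite tm0l cp0l cp0r (scalar_of0 (V_simple _)).
have [/and3P[_ _ nS]|/(chk_supported xS)->] := boolP [&& j \in S, l \in S & n \in S];
  last by rewrite tm0r cast0 cp0l !cp0r (scalar_of0 (V_simple _)).
by move: out; rewrite iS jS kS lS mS nS.
Qed.

Lemma Tbar_seq u v x y : supported u -> supported v -> supported x ->
  Tbar u v x y = \sum_(i <- S) \sum_(j <- S) \sum_(k <- S)
    \sum_(l <- S) \sum_(m <- S) \sum_(n <- S)
    scalar_of
      (cp (hat u i n m)
       (cp (tm (idC (V i)) (hat v j l n))
        (cp (cast erefl (tensA C (V i) (V j) (V l))
               (tm (chk x i j k) (idC (V l))))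
            (chk y k l m)))).
Proof.
move=> uS vS xS; apply: fsbig6_seq => // i j k l m n out.
have [/and3P[iS nS mS]|/(hat_supported uS)->] := boolP [&& i \in S, n \in S & m \in S];
  last by rewrite cp0l (scalar_of0 (V_simple _)).
have [/and3P[jS lS _]|/(hat_supported vS)->] := boolP [&& j \in S, l \in S & n \in S];
  last by rewrite tm0r cp0l cp0r (scalar_of0 (V_simple _)).
have [/and3P[_ _ kS]|/(chk_supported xS)->] := boolP [&& i \in S, j \in S & k \in S];
  last by rewrite tm0l cast0 cp0l !cp0r (scalar_of0 (V_simple _)).
by move: out; rewrite iS jS kS lS mS nS.
Qed.

Lemma Aop_hat z a b c : hat (A z) a b c = Ahat dv z a b c. Proof. by []. Qed.
Lemma Aop_chk z a b c : chk (A z) a b c = Achk bv z a b c. Proof. by []. Qed.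
Lemma Bop_hat z a b c : hat (B z) a b c = Bhat starK dv z a b c. Proof. by []. Qed.
Lemma Bop_chk z a b c : chk (B z) a b c = Bchk starK bv z a b c. Proof. by []. Qed.
Lemma hat_only_hat F F0 i j k : hat (@hat_only F F0) i j k = F i j k. Proof. by []. Qed.
Lemma hat_only_chk F F0 i j k : chk (@hat_only F F0) i j k = 0. Proof. by []. Qed.

Section Contractions.
Variables u v x y : Hsp V.
Hypotheses (uS : supported u) (vS : supported v) (xS : supported x) (yS : supported y).

(* [T u v x y] is linear in [y], hence of the form [<T_repr, y>]. *)
Definition T_repr_hat (i n m : Ix) : hm (tn (V i) (V n)) (V m) :=
  \sum_(j <- S) \sum_(k <- S) \sum_(l <- S)
    cp (hat u k l m) (cp (tm (hat v i j k) (idC (V l)))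
      (cast erefl (esym (tensA C (V i) (V j) (V l))) (tm (idC (V i)) (chk x j l n)))).

Lemma T_repr_hat0 i n m : ~~ [&& i \in S, n \in S & m \in S] -> T_repr_hat i n m = 0.
Proof.
move=> inm_out; rewrite /T_repr_hat big1 // => j _; rewrite big1 // => k _.
rewrite big1 // => l _.
case iS: (i \in S); last by rewrite (hat_supported vS) ?iS // tm0l cp0l cp0r.
case nS: (n \in S); last by rewrite (chk_supported xS) ?nS ?andbF // tm0r cast0 !cp0r.
case mS: (m \in S); last by rewrite (hat_supported uS) ?mS ?andbF // cp0l.
by move: inm_out; rewrite iS nS mS.
Qed.

Definition T_repr := hat_only T_repr_hat0.

Lemma Tf_hform_repr z : supported z -> Tf u v x z = hform T_repr z.
Proof.
move=> zS; rewrite Tf_seq // (hform_seq (supported_hat_only _) zS); symmetry.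
under eq_bigr => a _ do under eq_bigr => b _ do under eq_bigr => c _ do
  rewrite hat_only_chk cp0r (scalar_of0 (V_simple _)) addr0 hat_only_hat
    /T_repr_hat comp_suml3 (scalar_of_sum3 (V_simple _)).
symmetry; apply: eq_bigr => i _.
rewrite big_rotr5; apply: eq_bigr => n _; rewrite big_rotr4; apply: eq_bigr => m _.
by do 3 (apply: eq_bigr => ? _); rewrite !cA.
Qed.

Lemma hform_Aop_repr : hform (A T_repr) y = Tbar y u (A v) x.
Proof.
rewrite (hform_seq (supported_Aop (supported_hat_only _)) yS).
rewrite (Tbar_seq _ yS uS (supported_Aop vS)).
under eq_bigr => a _ do under eq_bigr => b _ do under eq_bigr => c _ do
  rewrite Aop_hat /Ahat hat_only_chk tm0r cast0 cp0r cp0l (scalar_of0 (V_simple _)) add0r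
    Aop_chk /Achk hat_only_hat /T_repr_hat tensm_sumr3 comp_suml3 comp_sumr3
    (scalar_of_sum3 (V_simple _)).
apply: eq_bigr => i _; symmetry.
rewrite big_rotr5; apply: eq_bigr => n _; rewrite big_rotr4; apply: eq_bigr => m _.
rewrite exchange_big; do 3 (apply: eq_bigr => ? _).
by rewrite Aop_chk /Achk coev_slide.
Qed.

Lemma Tf_Tbar_exchange : Tf u x v y = Tbar u (A v) (B x) y.
Proof.
rewrite Tf_seq // (Tbar_seq _ uS (supported_Aop vS) (supported_Bop xS)).
rewrite [RHS]big_rotr3; under [RHS]eq_bigr => k _ do rewrite exchange_big.
apply: eq_bigr => i _; rewrite big_star; apply: eq_bigr => j _; apply: eq_bigr => k _.
rewrite [RHS]big_rotr3; under [RHS]eq_bigr => n _ do rewrite exchange_big.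
do 3 (apply: eq_bigr => ? _).
by rewrite Aop_hat Bop_chk /Ahat /Bchk (comp2_congr (zigzag1_exchange _ _ (zigzag1_star j))).
Qed.

(* Likewise [Tbar v (B x) y w = <Tbar_repr, w>]. *)
Definition Tbar_repr_hat (k l m : Ix) : hm (tn (V k) (V l)) (V m) :=
  \sum_(i <- S) \sum_(j <- S) \sum_(n <- S)
    cp (hat v i n m) (cp (tm (idC (V i)) (hat (B x) j l n))
      (cast erefl (tensA C (V i) (V j) (V l)) (tm (chk y i j k) (idC (V l))))).

Lemma Tbar_repr_hat0 k l m : ~~ [&& k \in S, l \in S & m \in S] -> Tbar_repr_hat k l m = 0.
Proof.
move=> klm_out; rewrite /Tbar_repr_hat big1 // => i _; rewrite big1 // => j _.
rewrite big1 // => n _.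
case kS: (k \in S); last by rewrite (chk_supported yS) ?kS ?andbF // tm0l cast0 !cp0r.
case lS: (l \in S); last first.
  by rewrite (hat_supported (supported_Bop xS)) ?lS ?andbF // tm0r cp0l cp0r.
case mS: (m \in S); last by rewrite (hat_supported vS) ?mS ?andbF // cp0l.
by move: klm_out; rewrite kS lS mS.
Qed.

Definition Tbar_repr := hat_only Tbar_repr_hat0.

Lemma Tbar_hform_repr w : supported w -> Tbar v (B x) y w = hform Tbar_repr w.
Proof.
move=> wS; rewrite (Tbar_seq _ vS (supported_Bop xS) yS) (hform_seq (supported_hat_only _) wS).
symmetry.
under eq_bigr => a _ do under eq_bigr => b _ do under eq_bigr => c _ do
  rewrite hat_only_chk cp0r (scalar_of0 (V_simple _)) addr0 hat_only_hat
    /Tbar_repr_hat comp_suml3 (scalar_of_sum3 (V_simple _)).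
symmetry.
rewrite big_rotr3; apply: eq_bigr => k _.
rewrite big_rotr3; apply: eq_bigr => l _.
rewrite big_rotr3; apply: eq_bigr => m _.
by do 3 (apply: eq_bigr => ? _); rewrite !cA.
Qed.

Lemma hform_Bop_repr : hform (B Tbar_repr) u = Tf u v x y.
Proof.
rewrite (hform_seq (supported_Bop (supported_hat_only _)) uS) Tf_seq //.
under eq_bigr => a _ do under eq_bigr => b _ do under eq_bigr => c _ do
  rewrite Bop_hat /Bhat hat_only_chk tm0l cast0 cp0r cp0l (scalar_of0 (V_simple _)) add0r
    Bop_chk /Bchk hat_only_hat /Tbar_repr_hat tensm_suml3 comp_suml3 comp_sumr3
    (scalar_of_sum3 (V_simple _)).
symmetry.
rewrite big_rotr3; apply: eq_bigr => k _.
rewrite big_rotr3; apply: eq_bigr => l _.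
rewrite big_rotr3; apply: eq_bigr => m _.
apply: eq_bigr => i _; rewrite exchange_big; apply: eq_bigr => n _; apply: eq_bigr => j _.
by rewrite Bop_hat /Bhat (zigzag2_exchange _ _ _ (zigzag2_star l)) -chk_transport.
Qed.

Lemma Tf_Tbar_identities (Astar Bstar : Hsp V -> Hsp V)
    (hAstar : forall a b, hform (A a) b = hform a (Astar b))
    (hBstar : forall a b, hform (B a) b = hform a (Bstar b)) :
  supported (Astar y) -> supported (Bstar u) ->
  [/\ Tf u v x (Astar y) = Tbar y u (A v) x,
      Tf u x v y = Tbar u (A v) (B x) y &
      Tf u v x y = Tbar v (B x) y (Bstar u)].
Proof.
move=> AyS BuS; split.
- by rewrite (Tf_hform_repr AyS) -hAstar hform_Aop_repr.
- exact: Tf_Tbar_exchange.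
- by rewrite -hform_Bop_repr hBstar (Tbar_hform_repr BuS).
Qed.

End Contractions.
End Supported.
End PsiSystem.

Section FiniteSupport.
Variables (K : fieldType) (C : smcat K) (Ix : choiceType) (V : Ix -> ob C).

Lemma Hsp_support_seq (z : Hsp V) : exists s : seq Ix, forall i j k,
  hat z i j k != 0 \/ chk z i j k != 0 -> [&& i \in s, j \in s & k \in s].
Proof.
have [t Et] := (finite_seqP _).1 (hfin z).
exists (flatten [seq [:: p.1.1; p.1.2; p.2] | p <- t]) => i j k nz.
have ijk_t : (i, j, k) \in t by have : [set` t] (i, j, k) by rewrite -Et.
by apply/and3P; split; apply/flatten_mapP; exists (i, j, k); rewrite // !inE eqxx ?orbT.
Qed.

Lemma exists_star_closed_support (star : Ix -> Ix) (starK : involutive star)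
    (zs : seq (Hsp V)) :
  exists S : seq Ix, [/\ uniq S, forall i, i \in S -> star i \in S &
                         forall z, List.In z zs -> supported S z].
Proof.
have [s sP] : exists s : seq Ix, forall z, List.In z zs -> forall i j k,
    hat z i j k != 0 \/ chk z i j k != 0 -> [&& i \in s, j \in s & k \in s].
  elim: zs => [|z zs [s sP]]; first by exists [::].
  have [t tP] := Hsp_support_seq z.
  exists (t ++ s) => z' [<-|/sP z'P] i j k nz; rewrite !mem_cat.
    by case/and3P: (tP _ _ _ nz) => -> -> ->.
  by case/and3P: (z'P _ _ _ nz) => -> -> ->; rewrite !orbT.
exists (undup (s ++ map star s)); split; first exact: undup_uniq.
  move=> i; rewrite !mem_undup !mem_cat => /orP[iS|/mapP[a aS ->]].
    by rewrite map_f ?orbT.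
  by rewrite starK aS.
have sub a : a \in s -> a \in undup (s ++ map star s) by rewrite mem_undup mem_cat => ->.
move=> z z_in i j k out; split; apply/eqP; apply: contraNT out => nz;
  [have := sP z z_in i j k (or_introl nz) | have := sP z z_in i j k (or_intror nz)];
  by case/and3P => /sub -> /sub -> /sub ->.
Qed.

End FiniteSupport.

Theorem lemma2p1 (K : fieldType) (C : smcat K) (Ix : choiceType)
  (V : Ix -> ob C) (star : Ix -> Ix) (starK : involutive star)
  (bv : forall i, mor C (unit_ob C) (tens C (V i) (V (star i))))
  (dv : forall i, mor C (tens C (V i) (V (star i))) (unit_ob C))
  (hpsi : psi_system starK bv dv)
  (Astar Bstar : Hsp V -> Hsp V)
  (hAstar : forall x y : Hsp V,
      hform (Aop starK bv dv x) y = hform x (Astar y))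
  (hBstar : forall x y : Hsp V,
      hform (Bop starK bv dv x) y = hform x (Bstar y))
  (u v x y : Hsp V) :
  [/\ Tf u v x (Astar y) = Tbar y u (Aop starK bv dv v) x,
      Tf u x v y = Tbar u (Aop starK bv dv v) (Bop starK bv dv x) y &
      Tf u v x y = Tbar v (Bop starK bv dv x) y (Bstar u)].
Proof.
case: hpsi => V_simple _ V_zigzag _.
have [S [S_uniq S_star zS]] :=
  exists_star_closed_support starK [:: u; v; x; y; Astar y; Bstar u].
apply: (Tf_Tbar_identities V_simple V_zigzag S_uniq S_star) => //;
  by apply: zS; rewrite /=; tauto.
Qed.
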